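(* Let $N$ be an indecomposable $n$-dimensional two-step nilpotent Lie algebra over $\mathbb{C}$, and let its center have dimension $p$. Then \[ 1 \le p \le n + \tfrac{1}{2} - \sqrt{2n + \tfrac{1}{4}}. \]
   Context: A two-step nilpotent Lie algebra is a non-abelian Lie algebra $N$ with $[N,[N,N]]=0$. A Lie algebra is decomposable if it is a direct sum of two nonzero ideals, and indecomposable otherwise. *)

From HB Require Import structures.
From mathcomp Require Import all_boot all_order all_algebra.
From mathcomp Require Import reals realfun complex.
Set Implicit Arguments. Unset Strict Implicit. Unset Printing Implicit Defensive.
Import Order.TTheory GRing.Theory Num.Theory.
Local Open Scope ring_scope.

Section Lie.
Variables (F : fieldType) (V : vectType F).

Definition lie_bracket (br : V -> V -> V) : Prop :=
  [/\ (forall (a : F) x y z, br (a *: x + y) z = a *: br x z + br y z),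
      (forall (a : F) x y z, br z (a *: x + y) = a *: br z x + br z y),
      (forall x, br x x = 0) &
      (forall x y z, br x (br y z) + br y (br z x) + br z (br x y) = 0)].

Definition lie_ideal (br : V -> V -> V) (I : {vspace V}) : Prop :=
  forall x y, y \in I -> br x y \in I.

Definition lie_decomposable (br : V -> V -> V) : Prop :=
  exists I J : {vspace V},
    [/\ lie_ideal br I, lie_ideal br J, I != 0%VS, J != 0%VS &
        ((I + J)%VS = fullv /\ (I :&: J)%VS = 0%VS)].

Definition lie_indecomposable (br : V -> V -> V) : Prop :=
  ~ lie_decomposable br.

Definition two_step_nilpotent (br : V -> V -> V) : Prop :=
  (exists x y, br x y != 0) /\ (forall x y z, br x (br y z) = 0).

Definition lie_center_is (br : V -> V -> V) (Z : {vspace V}) : Prop :=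
  forall x, x \in Z <-> (forall y, br x y = 0).

End Lie.

(* Write N = Z (+) C with Z the center.  Every bracket lies in the span D of the
   brackets [c_i, c_j], i > j, of a basis (c_i) of the m-dimensional complement C,
   so dim D <= m(m-1)/2 with m = n - p.  If some central z were outside D, the line
   through z and any hyperplane containing D but not z would be two complementary
   ideals, so indecomposability forces Z <= D.  Hence 2p <= m(m-1), i.e.
   2n + 1/4 <= (n - p + 1/2)^2; and Z != 0 because [N, N] is central and nonzero. *)
From HB Require Import structures.
From mathcomp Require Import all_boot all_order all_algebra.
From mathcomp Require Import reals realfun complex.
From mathcomp Require Import zify lra.
Import Order.TTheory GRing.Theory Num.Theory.
Set Implicit Arguments. Unset Strict Implicit.
Local Open Scope ring_scope.

Lemma vline_compl_sup (F : fieldType) (V : vectType F) (U : {vspace V}) (z : V) :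
  z \notin U ->
  exists J : {vspace V},
    [/\ (U <= J)%VS, (<[z]> + J)%VS = fullv & (<[z]> :&: J = 0)%VS].
Proof.
move=> zNU; pose W := (U + <[z]>)%VS.
exists (U + W^C)%VS; split; first exact: addvSl.
  by rewrite addvA (addvC <[z]>%VS) addv_complf.
apply/eqP; rewrite -subv0; apply/subvP => v /memv_capP[/vlineP[a ->]].
case/memv_addP => u Uu [w Ww zE]; rewrite memv0.
have w0 : w = 0.
  apply/eqP; rewrite -memv0 -(capv_compl W) memv_cap Ww andbT.
  have -> : w = a *: z - u by rewrite zE addrC addKr.
  by rewrite memvB ?memvZ ?(subvP (addvSr _ _) _ (memv_line z)) ?(subvP (addvSl _ _)).
have [->|a0] := eqVneq a 0; first by rewrite scale0r.
by case/negP: zNU; rewrite -[z](scalerK a0) memvZ // zE w0 addr0.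
Qed.

Section LieBracket.
Variables (F : fieldType) (V : vectType F) (br : V -> V -> V).
Hypothesis brL : lie_bracket br.

Lemma brDl x y z : br (x + y) z = br x z + br y z.
Proof. by case: brL => linl _ _ _; have := linl 1 x y z; rewrite !scale1r. Qed.

Lemma brDr x y z : br z (x + y) = br z x + br z y.
Proof. by case: brL => _ linr _ _; have := linr 1 x y z; rewrite !scale1r. Qed.

Lemma br0l y : br 0 y = 0.
Proof. by apply: (addrI (br 0 y)); rewrite -brDl !addr0. Qed.

Lemma br0r y : br y 0 = 0.
Proof. by apply: (addrI (br y 0)); rewrite -brDr !addr0. Qed.

Lemma brZl a x z : br (a *: x) z = a *: br x z.
Proof. by case: brL => linl _ _ _; have := linl a x 0 z; rewrite !addr0 br0l addr0. Qed.

Lemma brZr a x z : br z (a *: x) = a *: br z x.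
Proof. by case: brL => _ linr _ _; have := linr a x 0 z; rewrite !addr0 br0r addr0. Qed.

Lemma brN x y : br x y = - br y x.
Proof.
case: brL => _ _ alt _; apply/eqP; rewrite -addr_eq0.
by have := alt (x + y); rewrite brDl !brDr !alt add0r addr0 addrC => ->.
Qed.

Lemma br_suml I (r : seq I) (v : I -> V) y :
  br (\sum_(i <- r) v i) y = \sum_(i <- r) br (v i) y.
Proof. exact: (big_morph (br^~ y) (fun a b => brDl a b y) (br0l y)). Qed.

Lemma br_sumr I (r : seq I) (v : I -> V) y :
  br y (\sum_(i <- r) v i) = \sum_(i <- r) br y (v i).
Proof. exact: (big_morph (br y) (fun a b => brDr a b y) (br0r y)). Qed.

Definition bracket_span n (X : n.-tuple V) : {vspace V} :=
  (\sum_(i < n) \sum_(j < i) <[br X`_i X`_j]>)%VS.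

Lemma dim_bracket_span n (X : n.-tuple V) : (\dim (bracket_span X) <= 'C(n, 2))%N.
Proof.
rewrite -bin2_sum big_mkord; apply: leq_trans (dimv_leq_sum _ _ _) _.
apply: leq_sum => i _; apply: leq_trans (dimv_leq_sum _ _ _) _.
rewrite -[X in (_ <= X)%N]card_ord -sum1_card leq_sum // => j _.
by rewrite dim_vline leq_b1.
Qed.

Lemma mem_bracket_span_basis n (X : n.-tuple V) (i j : 'I_n) :
  br X`_i X`_j \in bracket_span X.
Proof.
have mem_lt (k l : 'I_n) : (l < k)%N -> br X`_k X`_l \in bracket_span X.
  move=> lt_lk; apply: (subvP (sumv_sup k isT (subvv _))).
  exact: (subvP (sumv_sup (Ordinal lt_lk) isT (subvv _))) _ (memv_line _).
have [lt_ji|lt_ij|/val_inj ->] := ltngtP j i; first exact: mem_lt.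
  by rewrite brN memvN mem_lt.
by case: brL => _ _ alt _; rewrite alt mem0v.
Qed.

Lemma mem_bracket_span_vbasis (U : {vspace V}) x y :
  x \in U -> y \in U -> br x y \in bracket_span (vbasis U).
Proof.
move=> /coord_vbasis-> /coord_vbasis->; rewrite br_suml.
apply: memv_suml => i _; rewrite brZl br_sumr memvZ //.
by apply: memv_suml => j _; rewrite brZr memvZ // mem_bracket_span_basis.
Qed.

Variable Z : {vspace V}.
Hypothesis brZ : lie_center_is br Z.

Lemma mem_bracket_span_compl_center x y : br x y \in bracket_span (vbasis Z^C).
Proof.
have brZl0 z w : z \in Z -> br z w = 0 by move/brZ.
have brZr0 z w : z \in Z -> br w z = 0 by move=> Zz; rewrite brN brZl0 ?oppr0.
have /memv_addP[zx Zzx [cx Ccx ->]] : x \in (Z + Z^C)%VS by rewrite addv_complf memvf.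
have /memv_addP[zy Zzy [cy Ccy ->]] : y \in (Z + Z^C)%VS by rewrite addv_complf memvf.
rewrite brDl !brDr !(brZl0 zx) // !(brZr0 zy) // !add0r.
exact: mem_bracket_span_vbasis.
Qed.

Lemma center_sub_brackets (U : {vspace V}) :
  (exists x y, br x y != 0) -> (forall x y, br x y \in U) ->
  lie_indecomposable br -> (Z <= U)%VS.
Proof.
move=> [x0 [y0 br0]] brU indec; apply/subvP => z Zz; apply: contraT => zNU.
have z0 : z != 0 by apply: contraNneq zNU => ->; rewrite mem0v.
have [J [sUJ zJ zJ0]] := vline_compl_sup zNU.
case: indec; exists <[z]>%VS, J; split => //.
- by move=> x y /vlineP[a ->]; rewrite brZr brN (brZ z).1 // oppr0 scaler0 mem0v.
- by move=> x y _; apply: (subvP sUJ) (brU x y).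
- by rewrite -dimv_eq0 dim_vline z0.
- by apply: contraNneq br0 => J0; rewrite -memv0 -J0 (subvP sUJ _ (brU x0 y0)).
Qed.

Lemma center_dim_gt0 :
  (exists x y, br x y != 0) -> (forall x y z, br x (br y z) = 0) -> (0 < \dim Z)%N.
Proof.
move=> [x [y br0]] nil2; rewrite lt0n dimv_eq0; apply: contraNneq br0 => Z0.
rewrite -memv0 -Z0; apply/brZ => w.
by rewrite brN nil2 oppr0.
Qed.

End LieBracket.

Lemma sqrt_bound_of_le_bin2 (R : rcfType) (n p : nat) :
  (p <= 'C(n - p, 2))%N ->
  (p%:R : R) <= n%:R + 1 / 2 - Num.sqrt (2 * n%:R + 1 / 4).
Proof.
rewrite bin2 -subn1 -divn2 => le_p_bin.
have le_pn : (p <= n)%N by lia.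
set m := (n - p)%N in le_p_bin.
have nE : (n%:R : R) = p%:R + m%:R by rewrite -natrD subnKC.
have le_2n : (2 * (p + m) <= m * m + m)%N by lia.
have le_2nR : 2 * (p%:R + m%:R) <= m%:R * m%:R + m%:R :> R.
  by move: le_2n; rewrite -(ler_nat R) !natrD !natrM; lra.
have le_sq : 2 * n%:R + 1 / 4 <= (m%:R + 1 / 2) ^+ 2 :> R by rewrite nE expr2; nra.
have m_ge0 : (0 : R) <= m%:R + 1 / 2 by apply: addr_ge0; [exact: ler0n | lra].
have : Num.sqrt (2 * n%:R + 1 / 4) <= m%:R + 1 / 2 :> R.
  by rewrite -[X in _ <= X]ger0_norm // -sqrtr_sqr ler_wsqrtr.
by rewrite nE; lra.
Qed.

Theorem proposition2 (R : realType) (N : vectType R[i]) (br : N -> N -> N)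
  (Z : {vspace N}) :
  lie_bracket br -> two_step_nilpotent br -> lie_indecomposable br ->
  lie_center_is br Z ->
  let n := \dim (fullv : {vspace N}) in
  let p := \dim Z in
  (1 <= p)%N /\
  (p%:R : R) <= n%:R + 1 / 2 - Num.sqrt (2 * n%:R + 1 / 4).
Proof.
move=> brL [nonab nil2] indec brZ n p.
split; first exact: center_dim_gt0 brZ nonab nil2.
apply: sqrt_bound_of_le_bin2.
have sZD := center_sub_brackets brL brZ nonab
  (mem_bracket_span_compl_center brL brZ) indec.
by rewrite -dimv_compl; apply: leq_trans (dimvS sZD) (dim_bracket_span _ _).
Qed.
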